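(* Let $n>2$, $1<k<n$, $G=H_B(n,k)$. For $h\ge 1$ let $d^{(h)}$ be the number of unordered pairs $\{u,v\}$ of vertices of $G$ with $d(u,v)=h$; let $d^{(2)}_{V_1}$ be the number of unordered pairs of vertices of $V_1$ at distance $2$, and $d^{(2)}_{V_2}$, $d^{(4)}_{V_2}$ the numbers of unordered pairs of vertices of $V_2$ at distance $2$ and $4$ respectively. Then (1) $d^{(1)}=\binom{n}{k}\left(\frac{3^k-3}{2}+2^{k-1}(3^{n-k}-1)\right)$; (2) $d^{(3)}=\binom{n}{k}\left(\frac{3^n-1}{2}-\binom{n}{k}-\frac{3^k-3}{2}-2^{k-1}(3^{n-k}-1)\right)$; (3) $d^{(2)}_{V_1}=\binom{\binom{n}{k}}{2}$; (4) $d^{(2)}_{V_2}+d^{(4)}_{V_2}=\binom{\frac{3^n-1}{2}-\binom{n}{k}}{2}$.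
   Context: Fix integers $n\ge 2$ and $1\le k<n$ and positive real numbers $x_1<x_2<\dots<x_n$. Let $\mathscr{B}_n=\{\pm x_1,\pm x_2,\dots,\pm x_{n-1},x_n\}$ (so $-x_n\notin\mathscr{B}_n$). Let $\phi(\mathscr{B}_n)$ be the family of all nonempty subsets $S\subseteq\mathscr{B}_n$ whose elements have pairwise distinct absolute values and whose element of largest absolute value is positive. Let $\mathscr{B}_n^+=\{x_1,\dots,x_n\}$, let $V_1$ be the set of all $k$-element subsets of $\mathscr{B}_n^+$, and let $V_2=\phi(\mathscr{B}_n)\setminus V_1$. For $A\in\phi(\mathscr{B}_n)$ put $A^\dagger=\{|a|:a\in A\}$. The bipartite Kneser B type-$k$ graph $H_B(n,k)$ is the simple graph with vertex set $V_1\cup V_2$ in which $X\in V_1$ and $Y\in V_2$ are adjacent if and only if $X\subseteq Y^\dagger$ or $Y^\dagger\subseteq X$, and there are no other edges. $d(u,v)$ denotes graph distance. *)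

From mathcomp Require Import all_boot all_algebra.
Unset Printing Implicit Defensive.

(* Encoding: the element  +x_i  (resp. -x_i) of {+-x_1,...,+-x_n} is the pair
   (i, false) (resp. (i, true)) with i : 'I_n (index i stands for x_{i+1}).
   Since 0 < x_1 < ... < x_n, |(+-x_i)| compares as the index i. *)
Notation elt n := ('I_n * bool)%type.

Section HB.
Variables n k : nat.

Definition inB (p : elt n) : bool := ~~ (p.2 && (p.1.+1 == n)).

Definition phiB (S : {set elt n}) : bool :=
  [&& S != set0,
      [forall p in S, inB p],
      [forall p in S, forall q in S, (p.1 == q.1) ==> (p == q)] &
      [forall p in S, [forall q in S, q.1 <= p.1] ==> ~~ p.2]].

Definition Bplus : {set elt n} := [set p | ~~ p.2].

Definition V1 (S : {set elt n}) : bool := (S \subset Bplus) && (#|S| == k).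
Definition V2 (S : {set elt n}) : bool := phiB S && ~~ V1 S.
Definition vertex (S : {set elt n}) : bool := V1 S || V2 S.

Definition dag (S : {set elt n}) : {set elt n} := [set (p.1, false) | p in S].

Definition adj1 (X Y : {set elt n}) : bool :=
  [&& V1 X, V2 Y & (X \subset dag Y) || (dag Y \subset X)].

Definition adj (X Y : {set elt n}) : bool := adj1 X Y || adj1 Y X.

Fixpoint walk (h : nat) (X Y : {set elt n}) : bool :=
  match h with
  | 0 => vertex X && (X == Y)
  | h'.+1 => vertex X && [exists Z, adj X Z && walk h' Z Y]
  end.

Definition dist_is (h : nat) (X Y : {set elt n}) : bool :=
  walk h X Y && [forall m : 'I_h, ~~ walk m X Y].

Definition npairs (P : pred {set elt n}) (h : nat) : nat :=
  #|[set U : {set {set elt n}} |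
      [exists X, exists Y,
        [&& X != Y, U == [set X; Y], P X, P Y & dist_is h X Y]]]|.

End HB.

(* The vertices in phi(B_n) are the nonempty partial sign functions on the
   indices 1..n whose sign at the largest index is +.  Negating every sign is an
   involution on nonempty partial sign functions that flips the sign at the top,
   so exactly half of them lie in phi(B_n): |phi(B_n)| = (3^n - 1)/2, and the same
   halving applies to sign functions with any prescribed per-index behaviour.
   For X in V_1 with support I, the neighbours of X are the Y with I inside
   supp Y (2^k 3^(n-k) / 2 of them) or supp Y inside I ((3^k - 1) / 2), the
   overlap being supp Y = I (2^(k-1)), minus X itself: this is formula (1).
   Since B_n^+ lies in V_2 and is adjacent to all of V_1, and every Y in V_2 has
   a neighbour in V_1 (trim or pad Y^dagger to k elements), the bipartite graph
   has its V_1-pairs at distance 2, its non-adjacent V_1-V_2 pairs at distance 3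
   and its V_2-pairs at distance 2 or 4, which gives (2), (3) and (4). *)

From mathcomp Require Import all_boot all_algebra zify lra.
(* Imported last so that [adj1] refers to the graph, not to matrix.v's lemma. *)
Import GRing.Theory Num.Theory.

Set Implicit Arguments.
Unset Strict Implicit.
Unset Printing Implicit Defensive.

Lemma card_involution_split (T : finType) (C : {set T}) (g : T -> T) (P : pred T) :
  involutive g -> {in C, forall x, g x \in C} -> {in C, forall x, P (g x) = ~~ P x} ->
  #|C| = 2 * #|[set x in C | P x]|.
Proof.
move=> gK gC gP.
have swap : g @: [set x in C | P x] = [set x in C | ~~ P x].
  apply/setP => y; rewrite inE; apply/imsetP/andP => [[x /setIdP [xC Px] ->]|[yC nPy]].
    by rewrite gC // gP // Px.
  by exists (g y); rewrite ?gK // inE gC // gP // nPy.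
rewrite -(cardsID [set x | P x] C) mul2n -addnn; congr (_ + _).
  by apply: eq_card => x; rewrite !inE.
rewrite -[#|[set x in C | P x]|](card_imset _ (inv_inj gK)) swap.
by apply: eq_card => x; rewrite !inE andbC.
Qed.

Lemma prod_nat_if_mem (T : finType) (I : {set T}) (x y : nat) :
  \prod_(i : T) (if i \in I then x else y) = x ^ #|I| * y ^ #|~: I|.
Proof.
rewrite (bigID (mem I)) /= (eq_bigr (fun=> x)) => [|i ->//].
rewrite [X in _ * X](eq_bigr (fun=> y)) => [|i /negbTE ->//].
by rewrite !prod_nat_const; congr (_ ^ _ * _ ^ _); apply: eq_card => i; rewrite ?inE.
Qed.

Lemma exists_subset_card (T : finType) (B : {set T}) m :
  m <= #|B| -> exists2 A : {set T}, A \subset B & #|A| = m.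
Proof.
rewrite -bin_gt0 -cards_draws => /card_gt0P [A]; rewrite inE => /andP [AB /eqP cA].
by exists A.
Qed.

Lemma set2_eq (T : finType) (x y x' y' : T) : x != y -> [set x; y] = [set x'; y'] ->
  (x' = x /\ y' = y) \/ (x' = y /\ y' = x).
Proof.
move=> xy E; have := set21 x' y'; have := set22 x' y'; have := set21 x y; have := set22 x y.
rewrite -{1 2}E E !inE.
by do 4![case/orP => /eqP ?]; subst; rewrite ?eqxx in xy *; auto.
Qed.

Lemma card_rel_pairs (T : finType) (P : pred T) (R : rel T) :
  #|[set XY : T * T | P XY.1 && R XY.1 XY.2]| = \sum_(X | P X) #|[set Y | R X Y]|.
Proof.
rewrite -sum1_card (eq_bigl (fun XY : T * T => P XY.1 && R XY.1 XY.2)); last by move=> ?; rewrite inE.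
rewrite -(pair_big_dep P R (fun _ _ => 1)) /=.
by apply: eq_bigr => X _; rewrite sum1_card; apply: eq_card => Y; rewrite inE.
Qed.

Section SignedSets.
Variable n : nat.
Implicit Types (S : {set elt n}) (p q : elt n) (i : 'I_n).

Definition abs_distinct S := [forall p in S, forall q in S, (p.1 == q.1) ==> (p == q)].
Definition max_positive S := [forall p in S, [forall q in S, q.1 <= p.1] ==> ~~ p.2].
Definition uses S i := [exists p in S, p.1 == i].

Lemma abs_distinctP S :
  reflect {in S &, forall p q, p.1 = q.1 -> p = q} (abs_distinct S).
Proof.
apply: (iffP forall_inP) => [dS p q pS qS e|dS p pS].
  by move/forall_inP: (dS p pS) => /(_ q qS); rewrite e eqxx => /eqP.
by apply/forall_inP => q qS; apply/implyP => /eqP /(dS p q pS qS) ->.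
Qed.

Lemma usesP S i : reflect (exists2 p, p \in S & p.1 = i) (uses S i).
Proof. by apply: (iffP exists_inP) => -[p pS /eqP]; exists p. Qed.

Lemma max_positiveE S p : abs_distinct S -> p \in S -> {in S, forall q, q.1 <= p.1} ->
  max_positive S = ~~ p.2.
Proof.
move=> /abs_distinctP dS pS pmax; apply/forall_inP/idP => [mS|np q qS].
  by apply: (implyP (mS p pS)); apply/forall_inP.
apply/implyP => /forall_inP qmax; suff -> : q = p by [].
by apply: dS => //; apply/val_inj/eqP; rewrite eqn_leq pmax ?qmax.
Qed.

Lemma phiBE S : phiB n S = [&& S != set0, abs_distinct S & max_positive S].
Proof.
rewrite /phiB -/(abs_distinct S) -/(max_positive S).
case: (S != set0) => //=; case: (abs_distinct S); rewrite ?andbF //=.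
case mS: (max_positive S); rewrite ?andbF ?andbT //.
apply/forall_inP => p pS; rewrite /inB; apply/negP => /andP [p2 /eqP pn].
have pmax : [forall q in S, q.1 <= p.1].
  by apply/forall_inP => q _; rewrite -ltnS pn ltn_ord.
by move: (implyP (forall_inP mS p pS) pmax); rewrite p2.
Qed.

Definition opp_elt p : elt n := (p.1, ~~ p.2).
Definition opp_set S := opp_elt @: S.

Lemma opp_eltK : involutive opp_elt.
Proof. by case=> i b; rewrite /opp_elt negbK. Qed.

Lemma opp_setK : involutive opp_set.
Proof.
by move=> S; rewrite /opp_set -imset_comp (eq_imset _ opp_eltK) imset_id.
Qed.

Lemma abs_distinct_opp S : abs_distinct (opp_set S) = abs_distinct S.
Proof.
suff imp S' : abs_distinct S' -> abs_distinct (opp_set S').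
  by apply/idP/idP => [/imp|/imp//]; rewrite opp_setK.
move=> /abs_distinctP dS; apply/abs_distinctP => _ _ /imsetP [p pS ->] /imsetP [q qS ->] /= e.
by rewrite (dS p q).
Qed.

Lemma uses_opp S i : uses (opp_set S) i = uses S i.
Proof.
apply/usesP/usesP => [[_ /imsetP [p pS ->] <-]|[p pS <-]]; first by exists p.
by exists (opp_elt p); first exact: imset_f.
Qed.

Lemma max_positive_opp S : S != set0 -> abs_distinct S ->
  max_positive (opp_set S) = ~~ max_positive S.
Proof.
case/set0Pn => p0 p0S dS.
have [p pS pmax] := @arg_maxnP _ p0 (mem S) (fun p : elt n => val p.1) p0S.
rewrite (max_positiveE dS pS pmax) negbK (@max_positiveE (opp_set S) (opp_elt p)).
- by rewrite negbK.
- by rewrite abs_distinct_opp.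
- exact: imset_f.
by move=> _ /imsetP [q qS ->] /=; apply: pmax.
Qed.

(* A set with pairwise distinct absolute values is the graph of a partial
   sign function on the indices. *)
Definition set_of_signs (f : {ffun 'I_n -> option bool}) : {set elt n} :=
  [set p | f p.1 == Some p.2].

Definition signs_of_set S : {ffun 'I_n -> option bool} :=
  [ffun i => if [pick p in S | p.1 == i] is Some p then Some p.2 else None].

Lemma set_of_signs_distinct f : abs_distinct (set_of_signs f).
Proof.
apply/abs_distinctP => -[i b] [j c]; rewrite !inE /= => /eqP fi /eqP fj ji.
by move: fi; rewrite ji fj => -[->].
Qed.

Lemma uses_set_of_signs f i : uses (set_of_signs f) i = (f i != None).
Proof.
apply/usesP/idP => [[p]|]; first by rewrite inE => /eqP fp <-; rewrite fp.
by case fi: (f i) => [b|] // _; exists (i, b); rewrite // inE fi.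
Qed.

Lemma set_of_signsK : cancel set_of_signs signs_of_set.
Proof.
move=> f; apply/ffunP => i; rewrite ffunE.
case: pickP => [[j c] /= /andP [] |none]; first by rewrite inE => /eqP fj /eqP <-.
by case fi: (f i) => [b|] //; move: (none (i, b)); rewrite inE fi !eqxx.
Qed.

Lemma signs_of_setK S : abs_distinct S -> set_of_signs (signs_of_set S) = S.
Proof.
move=> /abs_distinctP dS; apply/setP => -[i b]; rewrite inE ffunE /=.
case: pickP => [[j c] /= /andP [jcS /eqP ji]|noS]; last first.
  by apply/esym/negP => ibS; move: (noS (i, b)); rewrite ibS eqxx.
subst j; apply/eqP/idP => [[<-] //|ibS].
by have [->] := dS _ _ ibS jcS erefl.
Qed.

Definition sign_cond (a b : pred 'I_n) S := [forall i, if uses S i then a i else b i].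

Lemma card_sign_cond (a b : pred 'I_n) :
  #|[set S | abs_distinct S & sign_cond a b S]| = \prod_i (b i + 2 * a i).
Proof.
pose A i := [set o : option bool | if o is Some _ then a i else b i].
have -> : [set S | abs_distinct S & sign_cond a b S] = set_of_signs @: setXn A.
  apply/setP => S; rewrite inE; apply/andP/imsetP => [[dS cS]|[f /setXnP fA ->]].
    exists (signs_of_set S); last by rewrite signs_of_setK.
    apply/setXnP => i; move/forallP: cS => /(_ i).
    by rewrite inE -{1}(signs_of_setK dS) uses_set_of_signs; case: (signs_of_set S i).
  split; first exact: set_of_signs_distinct.
  by apply/forallP => i; rewrite uses_set_of_signs; move: (fA i); rewrite inE; case: (f i).
rewrite card_imset ?cardsXn; last exact: can_inj set_of_signsK.
apply: eq_bigr => i _; rewrite cardsE cardE /enum_mem -enumT /= enumT unlock /=.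
by case: (a i); case: (b i); rewrite ?unlock.
Qed.

Lemma sign_cond_opp (a b : pred 'I_n) S : sign_cond a b (opp_set S) = sign_cond a b S.
Proof. by apply: eq_forallb => i; rewrite uses_opp. Qed.

(* The summand [forall i, b i] is the empty set, which satisfies every
   [sign_cond a b] with all [b i] true but is not in phi(B_n). *)
Lemma card_phiB_cond (a b : pred 'I_n) :
  2 * #|[set S | phiB n S & sign_cond a b S]| + [forall i, b i] = \prod_i (b i + 2 * a i).
Proof.
rewrite -card_sign_cond [in RHS](cardsD1 set0) addnC; congr (_ + _).
  rewrite inE; have -> : abs_distinct set0 by apply/abs_distinctP => p q; rewrite inE.
  have uses0 i : uses set0 i = false by apply/usesP => -[p]; rewrite inE.
  by congr (nat_of_bool _); apply: eq_forallb => i; rewrite uses0.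
rewrite [RHS](card_involution_split (P := max_positive) opp_setK).
- congr (2 * _); apply: eq_card => S; rewrite !inE phiBE.
  by case: (S != set0) (abs_distinct S) (max_positive S) (sign_cond a b S) => [] [] [] [].
- move=> S; rewrite !inE => /and3P [nS dS cS].
  by rewrite abs_distinct_opp sign_cond_opp dS cS imset_eq0 nS.
by move=> S; rewrite !inE => /and3P [nS dS _]; rewrite max_positive_opp.
Qed.

End SignedSets.

Section PositivePart.
Variable n : nat.
Implicit Types (S X Y : {set elt n}) (i : 'I_n).

Lemma pos_elt_inj : injective (fun i : 'I_n => (i, false) : elt n).
Proof. by move=> i j []. Qed.

Lemma card_Bplus : #|Bplus n| = n.
Proof.
rewrite -[RHS]card_ord -(card_imset _ pos_elt_inj).
apply: eq_card => -[i b]; rewrite inE /=; apply/idP/imsetP => [|[j _ [_ ->]]] //.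
by case: b => // _; exists i.
Qed.

Lemma in_dag Y q : (q \in dag n Y) = ~~ q.2 && uses Y q.1.
Proof.
apply/imsetP/andP => [[p pY ->]|[q2 /usesP [p pY e]]]; first by split=> //; apply/usesP; exists p.
by exists p => //; case: q q2 e => i [] //= _ ->.
Qed.

Lemma uses_pos X i : X \subset Bplus n -> uses X i = ((i, false) \in X).
Proof.
move/subsetP => XB; apply/usesP/idP => [[[j b] jbX /= ji]|]; last by exists (i, false).
by move: (XB _ jbX); rewrite inE -ji; case: b jbX.
Qed.

Lemma dag_pos Y : Y \subset Bplus n -> dag n Y = Y.
Proof.
move=> YB; apply/setP => -[i b]; rewrite in_dag uses_pos //=.
by case: b => //; apply/esym/negP => /(subsetP YB); rewrite inE.
Qed.

Lemma phiB_pos S : S \subset Bplus n -> S != set0 -> phiB n S.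
Proof.
move/subsetP => SB nS; rewrite phiBE nS /=; apply/andP; split.
  apply/abs_distinctP => -[i b] [j c] /SB + /SB; rewrite !inE /=.
  by case: b; case: c => //= _ _ ->.
by apply/forall_inP => p /SB; rewrite inE => p2; apply/implyP.
Qed.

Lemma card_uses_pos X : X \subset Bplus n -> #|[set i | uses X i]| = #|X|.
Proof.
move=> XB; rewrite -(card_imset _ pos_elt_inj).
apply: eq_card => -[i b]; apply/imsetP/idP => [[j]|ibX].
  by rewrite inE uses_pos // => jX [-> ->].
have b0 : b = false by move: (subsetP XB _ ibX); rewrite inE; case: b {ibX}.
by subst b; exists i; rewrite // inE uses_pos.
Qed.

Definition on_uses X (t f : bool) : pred 'I_n := fun i => if uses X i then t else f.

Lemma subset_dag_cond X Y : X \subset Bplus n ->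
  (X \subset dag n Y) = sign_cond (on_uses X true true) (on_uses X false true) Y.
Proof.
move=> XB; apply/subsetP/forallP => [XY i|XY [i b] ibX].
  rewrite /on_uses; case uYi: (uses Y i) => //; case uXi: (uses X i) => //.
  by move: (XY (i, false)); rewrite in_dag uYi -uses_pos // uXi => /(_ isT).
have b0 : b = false by move: (subsetP XB _ ibX); rewrite inE; case: b {ibX}.
subst b; rewrite in_dag /=; move: (XY i); rewrite /on_uses (uses_pos _ XB) ibX.
by case: (uses Y i).
Qed.

Lemma dag_subset_cond X Y : X \subset Bplus n ->
  (dag n Y \subset X) = sign_cond (on_uses X true false) (on_uses X true true) Y.
Proof.
move=> XB; apply/subsetP/forallP => [YX i|YX [i b] ibY].
  rewrite /on_uses; case uYi: (uses Y i); last by case: (uses X i).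
  by rewrite (uses_pos _ XB) (YX (i, false)) // in_dag uYi.
move: ibY; rewrite in_dag /= => /andP [nb uYi]; move: (YX i); rewrite /on_uses uYi uses_pos //.
by case: b nb; case: ((i, false) \in X).
Qed.

End PositivePart.

Section Degree.
Variables (n k : nat) (X : {set elt n}).
Hypotheses (k_gt0 : 0 < k) (V1X : V1 n k X).

Let XB : X \subset Bplus n. Proof. by case/andP: V1X. Qed.

Lemma prod_on_uses (a1 a0 b1 b0 : bool) :
  \prod_i (on_uses X b1 b0 i + 2 * on_uses X a1 a0 i)
    = (b1 + 2 * a1) ^ k * (b0 + 2 * a0) ^ (n - k).
Proof.
have cardU : #|[set i | uses X i]| = k by rewrite card_uses_pos //; case/andP: V1X => _ /eqP.
have cardCU : #|~: [set i | uses X i]| = n - k.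
  by rewrite -cardU -[n in n - _]card_ord -(cardsC [set i | uses X i]) addKn.
rewrite -cardCU -cardU -prod_nat_if_mem; apply: eq_bigr => i _.
by rewrite inE /on_uses; case: (uses X i).
Qed.

Lemma forall_on_uses_false b0 : [forall i, on_uses X false b0 i] = false.
Proof.
have /card_gt0P [p pX] : 0 < #|X| by case/andP: V1X => _ /eqP ->.
apply/negbTE/forallP => /(_ p.1); rewrite /on_uses.
by case: usesP => // -[]; exists p.
Qed.

Let above := [set Y | phiB n Y & X \subset dag n Y].
Let below := [set Y | phiB n Y & dag n Y \subset X].

Lemma card_above : 2 * #|above| = 2 ^ k * 3 ^ (n - k).
Proof.
have := card_phiB_cond (on_uses X true true) (on_uses X false true).
rewrite forall_on_uses_false prod_on_uses addn0 => <-.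
by congr (2 * _); apply: eq_card => Y; rewrite !inE subset_dag_cond.
Qed.

Lemma card_below : 2 * #|below| + 1 = 3 ^ k.
Proof.
have := card_phiB_cond (on_uses X true false) (on_uses X true true).
have -> : [forall i, on_uses X true true i] by apply/forallP => i; rewrite /on_uses if_same.
rewrite prod_on_uses exp1n muln1 => <-.
by congr (2 * _ + _); apply: eq_card => Y; rewrite !inE dag_subset_cond.
Qed.

Lemma card_above_below : 2 * #|above :&: below| = 2 ^ k.
Proof.
have := card_phiB_cond (on_uses X true false) (on_uses X false true).
rewrite forall_on_uses_false prod_on_uses exp1n muln1 addn0 => <-.
congr (2 * _); apply: eq_card => Y; rewrite !inE subset_dag_cond // dag_subset_cond //.
case: (phiB n Y) => //=; apply/andP/forallP => [[/forallP supY /forallP subY] i|eqY].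
  by move: (supY i) (subY i); rewrite /on_uses; case: (uses Y i); case: (uses X i).
by split; apply/forallP => i; move: (eqY i); rewrite /on_uses; case: (uses Y i); case: (uses X i).
Qed.

Lemma adj1_V1_setE : [set Y | adj1 n k X Y] = (above :|: below) :\ X.
Proof.
apply/setP => Y; rewrite !inE /adj1 V1X /V2.
have [->|nYX] := eqVneq Y X; first by rewrite V1X andbF.
case: (phiB n Y) => //=; case: orP => [XY|_]; rewrite ?andbF ?andbT //.
apply/negP => /andP [YB /eqP cY].
case/andP: V1X => _ /eqP cX; apply: (negP nYX).
by case: XY; rewrite dag_pos // => sub; [rewrite eq_sym|]; rewrite eqEcard sub cX cY leqnn.
Qed.

Lemma card_adj1_V1 : 2 * #|[set Y | adj1 n k X Y]| + 3 + 2 ^ k = 3 ^ k + 2 ^ k * 3 ^ (n - k).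
Proof.
have X0 : X != set0 by rewrite -card_gt0; case/andP: V1X => _ /eqP ->.
have X_above : X \in above by rewrite inE phiB_pos // dag_pos ?subxx.
have := cardsD1 X (above :|: below); rewrite in_setU X_above -adj1_V1_setE.
have := cardsUI above below; have := card_above; have := card_below.
have := card_above_below; lia.
Qed.

End Degree.

Section Graph.
Variables n k : nat.
Implicit Types (X Y Z : {set elt n}).

Lemma V2_notV1 Y : V2 n k Y -> V1 n k Y = false.
Proof. by case/andP => _ /negbTE. Qed.

Lemma V1V2_neq X Y : V1 n k X -> V2 n k Y -> X != Y.
Proof. by move=> V1X /V2_notV1; apply: contraFneq => <-. Qed.

Lemma adjC X Y : adj n k X Y = adj n k Y X.
Proof. by rewrite /adj orbC. Qed.

Lemma adj_V1 X Y : adj n k X Y -> V1 n k X = ~~ V1 n k Y.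
Proof. by case/orP => /and3P [V1X /V2_notV1 -> _]; rewrite ?V1X ?(V2_notV1 V1X). Qed.

Lemma walk1 X Y : walk n k 1 X Y = adj n k X Y.
Proof.
apply/idP/idP => [/andP [_ /existsP [Z /and3P [XZ _ /eqP <-]]] //|XY] /=.
have vXY : vertex n k X && vertex n k Y.
  by case/orP: XY => /and3P [V1X V2Y _]; rewrite /vertex V1X V2Y ?orbT.
by case/andP: vXY => -> vY; apply/existsP; exists Y; rewrite XY vY eqxx.
Qed.

Lemma walk_cat a b X Y Z : walk n k a X Y -> walk n k b Y Z -> walk n k (a + b) X Z.
Proof.
elim: a X => [|a IH] X /=; first by case/andP => _ /eqP ->.
case/andP => vX /existsP [W /andP [XW WY]] YZ; rewrite vX /=.
by apply/existsP; exists W; rewrite XW (IH _ WY YZ).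
Qed.

Lemma walk_sym h X Y : walk n k h X Y -> walk n k h Y X.
Proof.
elim: h X => [|h IH] X; first by move=> /andP [vX /eqP <-]; rewrite /= vX eqxx.
case/andP => _ /existsP [Z /andP [XZ ZY]].
by rewrite -addn1; apply: walk_cat (IH _ ZY) _; rewrite walk1 adjC.
Qed.

Lemma walk_parity h X Y : walk n k h X Y -> V1 n k X = V1 n k Y (+) odd h.
Proof.
elim: h X => [|h IH] X /=; first by case/andP => _ /eqP ->; rewrite addbF.
case/andP => _ /existsP [Z /andP [/adj_V1 -> /IH ->]].
by case: (V1 n k Y); case: (odd h).
Qed.

Lemma dist_isP h X Y :
  reflect (walk n k h X Y /\ forall m, m < h -> ~~ walk n k m X Y) (dist_is n k h X Y).
Proof.
apply: (iffP andP) => [[w /forallP noW]|[w noW]]; split=> //.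
  by move=> m mh; apply: (noW (Ordinal mh)).
by apply/forallP => m; apply: noW.
Qed.

Lemma dist_is_sym h X Y : dist_is n k h X Y -> dist_is n k h Y X.
Proof.
case/dist_isP => w noW; apply/dist_isP; split; first exact: walk_sym.
by move=> m mh; apply: contra (noW m mh); apply: walk_sym.
Qed.

Lemma dist_is_uniq h h' X Y : dist_is n k h X Y -> dist_is n k h' X Y -> h = h'.
Proof.
move=> /dist_isP [w noW] /dist_isP [w' noW']; case: (ltngtP h h') => // hh'.
  by move/negP: (noW' _ hh').
by move/negP: (noW _ hh').
Qed.

Lemma walk_gt0 h X Y : X != Y -> walk n k h X Y -> 0 < h.
Proof. by case: h => //= /negbTE XY /andP [_]; rewrite XY. Qed.

Section Connected.
Hypotheses (k_gt0 : 0 < k) (k_lt_n : k < n).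

Lemma V2_Bplus : V2 n k (Bplus n).
Proof.
rewrite /V2 phiB_pos // -?card_gt0 ?card_Bplus ?(ltn_trans k_gt0) //.
by rewrite /V1 card_Bplus subxx /= neq_ltn k_lt_n orbT.
Qed.

Lemma adj_Bplus X : V1 n k X -> adj n k X (Bplus n).
Proof.
move=> V1X; apply/orP; left; rewrite /adj1 V1X V2_Bplus /= dag_pos ?subxx //.
by case/andP: V1X => ->.
Qed.

Lemma walk2_V1 X X' : V1 n k X -> V1 n k X' -> walk n k 2 X X'.
Proof.
move=> V1X V1X'; apply: (walk_cat (a := 1) (b := 1) (Y := Bplus n)); rewrite walk1 ?adj_Bplus //.
by rewrite adjC adj_Bplus.
Qed.

Lemma exists_V1_adj Y : V2 n k Y -> exists2 X, V1 n k X & adj n k X Y.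
Proof.
move=> V2Y; set D := dag n Y.
have DB : D \subset Bplus n by apply/subsetP => q; rewrite in_dag inE => /andP [].
have [kD|Dk] := leqP k #|D|.
  have [A AD cA] := exists_subset_card kD.
  have V1A : V1 n k A by rewrite /V1 (subset_trans AD DB) cA eqxx.
  by exists A => //; rewrite /adj /adj1 V1A V2Y AD.
have : k - #|D| <= #|Bplus n :\: D|.
  by rewrite cardsD (setIidPr DB) card_Bplus leq_sub2r // ltnW.
case/exists_subset_card => W WB cW.
have DW0 : D :&: W = set0.
  by apply/setP => q; rewrite !inE; apply/negP => /andP [qD /(subsetP WB)]; rewrite inE qD.
have V1DW : V1 n k (D :|: W).
  rewrite /V1 subUset DB (subset_trans WB (subsetDl _ _)) /=.
  by rewrite -[#|_|]addn0 -(cards0 (elt n)) -DW0 cardsUI cW subnKC // ltnW.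
by exists (D :|: W) => //; rewrite /adj /adj1 V1DW V2Y subsetUl orbT.
Qed.

Lemma walk3_V1V2 X Y : V1 n k X -> V2 n k Y -> walk n k 3 X Y.
Proof.
move=> V1X V2Y; have [X' V1X' X'Y] := exists_V1_adj V2Y.
by apply: (walk_cat (a := 2) (b := 1) (Y := X')); rewrite ?walk1 ?walk2_V1.
Qed.

Lemma walk4_V2 Y Y' : V2 n k Y -> V2 n k Y' -> walk n k 4 Y Y'.
Proof.
move=> V2Y V2Y'; have [X V1X XY] := exists_V1_adj V2Y.
by apply: (walk_cat (a := 1) (b := 3) (Y := X)); rewrite ?walk3_V1V2 // walk1 adjC.
Qed.

Lemma dist_is1_V1V2 X Y : V1 n k X -> V2 n k Y -> dist_is n k 1 X Y = adj1 n k X Y.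
Proof.
move=> V1X V2Y; have XY := V1V2_neq V1X V2Y.
apply/dist_isP/idP => [[]|a].
  by rewrite walk1 /adj /adj1 (V2_notV1 V2Y) /= orbF.
split; first by rewrite walk1 /adj a.
by case=> // _; apply/negP => /(walk_gt0 XY).
Qed.

Lemma dist_is3_V1V2 X Y : V1 n k X -> V2 n k Y -> dist_is n k 3 X Y = ~~ adj1 n k X Y.
Proof.
move=> V1X V2Y; have XY := V1V2_neq V1X V2Y.
apply/dist_isP/idP => [[_ noW]|na]; first by apply: contra (noW 1 isT); rewrite walk1 /adj => ->.
split; first exact: walk3_V1V2.
case=> [|[|[|m]]] // _; apply/negP.
- by move/(walk_gt0 XY).
- by rewrite walk1 /adj (negbTE na) /adj1 (V2_notV1 V2Y).
- by move/walk_parity; rewrite V1X (V2_notV1 V2Y).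
Qed.

Lemma dist_is2_V1 X X' : V1 n k X -> V1 n k X' -> X != X' -> dist_is n k 2 X X'.
Proof.
move=> V1X V1X' XX'; apply/dist_isP; split; first exact: walk2_V1.
case=> [|[|m]] // _; apply/negP; first by move/(walk_gt0 XX').
by move/walk_parity; rewrite V1X V1X'.
Qed.

Lemma dist_is24_V2 Y Y' : V2 n k Y -> V2 n k Y' -> Y != Y' ->
  dist_is n k 2 Y Y' || dist_is n k 4 Y Y'.
Proof.
move=> V2Y V2Y' YY'; have noW_odd m : odd m -> ~~ walk n k m Y Y'.
  by move=> om; apply/negP => /walk_parity; rewrite om (V2_notV1 V2Y) (V2_notV1 V2Y').
have noW0 : ~~ walk n k 0 Y Y' by apply/negP => /(walk_gt0 YY').
case w2: (walk n k 2 Y Y').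
  by apply/orP; left; apply/dist_isP; split=> // -[|[|m]] // _; apply: noW_odd.
apply/orP; right; apply/dist_isP; split; first exact: walk4_V2.
by case=> [|[|[|[|m]]]] // _; [apply: noW_odd | rewrite w2 | apply: noW_odd].
Qed.

End Connected.
End Graph.

Section Pairs.
Variables n k : nat.
Implicit Types (P : pred {set elt n}) (X Y : {set elt n}).

Lemma mem_draws2 P (U : {set {set elt n}}) :
  (U \in [set U : {set {set elt n}} | U \subset [set X | P X] & #|U| == 2])
    = [exists X, exists Y, [&& X != Y, U == [set X; Y], P X & P Y]].
Proof.
rewrite inE; apply/andP/existsP => [[sU /cards2P [X [Y [XY EU]]]]|[X /existsP [Y]]].
  have /(subsetP sU) : X \in U by rewrite EU set21.
  have /(subsetP sU) : Y \in U by rewrite EU set22.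
  by rewrite !inE => PY PX; exists X; apply/existsP; exists Y; rewrite XY EU eqxx PX PY.
case/and4P => XY /eqP -> PX PY; split; last by rewrite cards2 XY.
by apply/subsetP => Z; rewrite !inE => /orP [] /eqP ->.
Qed.

Definition pairs_at P h := [set U : {set {set elt n}} |
  [exists X, exists Y, [&& X != Y, U == [set X; Y], P X, P Y & dist_is n k h X Y]]].

Lemma npairsE P h : npairs n k P h = #|pairs_at P h|.
Proof. by []. Qed.

Lemma npairs_complete P h : (forall X Y, X != Y -> P X -> P Y -> dist_is n k h X Y) ->
  npairs n k P h = 'C(#|[set X | P X]|, 2).
Proof.
move=> dP; rewrite npairsE -cards_draws; apply: eq_card => U; rewrite mem_draws2 inE.
apply: eq_existsb => X; apply: eq_existsb => Y.
by case XY: (X != Y); case PX: (P X); case PY: (P Y); rewrite ?andbF //= dP.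
Qed.

Lemma npairs_split P h h' : h != h' ->
  (forall X Y, X != Y -> P X -> P Y -> dist_is n k h X Y || dist_is n k h' X Y) ->
  npairs n k P h + npairs n k P h' = 'C(#|[set X | P X]|, 2).
Proof.
move=> hh' dP; rewrite !npairsE -cards_draws -cardsUI.
have -> : pairs_at P h :&: pairs_at P h' = set0.
  apply/setP => U; rewrite !inE; apply/negP.
  case/andP => /existsP [X /existsP [Y /and5P [XY /eqP -> _ _ dXY]]].
  case/existsP => X' /existsP [Y' /and5P [_ /eqP E _ _ dXY']].
  apply: (negP hh'); apply/eqP; case: (set2_eq XY E) => -[eX eY]; subst X' Y'.
    exact: dist_is_uniq dXY dXY'.
  exact: dist_is_uniq dXY (dist_is_sym dXY').
rewrite cards0 addn0; apply: eq_card => U; rewrite mem_draws2 !inE.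
apply/orP/existsP => [|[X /existsP [Y /and4P [XY EU PX PY]]]].
  by case=> /existsP [X /existsP [Y /and5P [XY EU PX PY _]]];
    exists X; apply/existsP; exists Y; rewrite XY EU PX PY.
by case/orP: (dP X Y XY PX PY) => d; [left|right];
  apply/existsP; exists X; apply/existsP; exists Y; rewrite XY EU PX PY d.
Qed.

Lemma dist_is_odd_V1V2 h X Y : odd h -> vertex n k X -> vertex n k Y ->
  dist_is n k h X Y -> V1 n k X && V2 n k Y || V2 n k X && V1 n k Y.
Proof.
move=> oh vX vY /dist_isP [/walk_parity]; rewrite oh addbT => eXY _.
case/orP: vX => [V1X|V2X]; case/orP: vY => [V1Y|V2Y]; rewrite ?V1X ?V1Y ?V2X ?V2Y ?orbT //.
  by rewrite V1X V1Y in eXY.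
by rewrite (V2_notV1 V2X) (V2_notV1 V2Y) in eXY.
Qed.

Lemma npairs_odd h : odd h -> npairs n k (vertex n k) h
  = \sum_(X | V1 n k X) #|[set Y | V2 n k Y & dist_is n k h X Y]|.
Proof.
move=> oh; rewrite -(card_rel_pairs (V1 n k) (fun X Y => V2 n k Y && dist_is n k h X Y)).
set Pr := [set XY | _].
have inj : {in Pr &, injective (fun XY => [set XY.1; XY.2])}.
  move=> [X Y] [X' Y']; rewrite !inE /= => /and3P [V1X V2Y _] /and3P [V1X' _ _] E.
  case: (set2_eq (V1V2_neq V1X V2Y) E) => -[eX eY]; first by rewrite eX eY.
  by rewrite eX (V2_notV1 V2Y) in V1X'.
rewrite npairsE -(card_in_imset inj); apply: eq_card => U; rewrite inE.
apply/existsP/imsetP => [[X /existsP [Y /and5P [XY /eqP -> vX vY dXY]]]|[[X Y]]].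
  case/orP: (dist_is_odd_V1V2 oh vX vY dXY) => /andP [V1X V2Y].
    by exists (X, Y); rewrite // inE V1X V2Y.
  by exists (Y, X); rewrite /= 1?setUC // inE V1X V2Y dist_is_sym.
rewrite inE /= => /and3P [V1X V2Y dXY] ->.
by exists X; apply/existsP; exists Y; rewrite (V1V2_neq V1X V2Y) eqxx /vertex V1X V2Y orbT.
Qed.

End Pairs.

Lemma card_V1 n k : #|[set X | V1 n k X]| = 'C(n, k).
Proof.
rewrite -[in RHS](card_Bplus n) -cards_draws.
by apply: eq_card => X; rewrite !inE.
Qed.

Lemma card_phiB n : 2 * #|[set Y | phiB n Y]| + 1 = 3 ^ n.
Proof.
have := @card_phiB_cond n predT predT; rewrite (eq_bigr (fun=> 3)) // prod_nat_const card_ord.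
have -> : [forall i : 'I_n, predT i] by apply/forallP.
move=> <-; congr (2 * _ + _); apply: eq_card => Y; rewrite !inE.
suff -> : sign_cond predT predT Y by rewrite andbT.
by apply/forallP => i; rewrite if_same.
Qed.

Lemma card_V2 n k : 0 < k -> #|[set Y | V2 n k Y]| + 'C(n, k) = #|[set Y | phiB n Y]|.
Proof.
move=> k_gt0; rewrite -card_V1 -(cardsID [set X | V1 n k X] [set Y | phiB n Y]) addnC.
congr (_ + _); apply: eq_card => Y; rewrite !inE; last by rewrite /V2 andbC.
case V1Y: (V1 n k Y); rewrite ?andbT ?andbF; last by [].
by case/andP: V1Y => YB /eqP cY; apply/esym/phiB_pos; rewrite // -card_gt0 cY.
Qed.

Lemma card_V2_nat n k : (0 < k)%N -> #|[set Y | V2 n k Y]| = ((3 ^ n - 1) %/ 2 - 'C(n, k))%N.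
Proof. by move=> k_gt0; rewrite -(card_phiB n) addnK mulKn // -(card_V2 n k_gt0) addnK. Qed.

Lemma card_dist1 n k X : V1 n k X ->
  #|[set Y | V2 n k Y & dist_is n k 1 X Y]| = #|[set Y | adj1 n k X Y]|.
Proof.
move=> V1X; apply: eq_card => Y; rewrite !inE.
case V2Y: (V2 n k Y); last by rewrite /adj1 V2Y /= andbF.
by rewrite dist_is1_V1V2.
Qed.

Lemma card_dist3 n k X : (0 < k)%N -> (k < n)%N -> V1 n k X ->
  (#|[set Y | V2 n k Y & dist_is n k 3 X Y]| + #|[set Y | adj1 n k X Y]|
    = #|[set Y | V2 n k Y]|)%N.
Proof.
move=> k_gt0 k_lt_n V1X.
rewrite -(cardsID [set Y | adj1 n k X Y] [set Y | V2 n k Y]) addnC.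
congr (_ + _); apply: eq_card => Y; rewrite !inE.
  by case V2Y: (V2 n k Y); last by rewrite /adj1 V2Y /= andbF.
case V2Y: (V2 n k Y); last by rewrite andbF.
by rewrite dist_is3_V1V2 // andbT.
Qed.

Local Open Scope ring_scope.

Lemma card_adj1_V1_rat n k X : (0 < k)%N -> V1 n k X ->
  #|[set Y | adj1 n k X Y]|%:R = (3 ^+ k - 3) / 2 + 2 ^+ k.-1 * (3 ^+ (n - k) - 1) :> rat.
Proof.
move=> k_gt0 V1X; have := congr1 (fun m => m%:R : rat) (card_adj1_V1 k_gt0 V1X).
rewrite -[in (2 ^ k)%N](prednK k_gt0) expnS !natrD !natrM !natrX mulrBr mulr1.
set p := 2 ^+ k.-1; set q := p * _.
by rewrite -mulrA -/q; lra.
Qed.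

Lemma card_V2_rat n k : (0 < k)%N ->
  #|[set Y | V2 n k Y]|%:R = (3 ^+ n - 1) / 2 - 'C(n, k)%:R :> rat.
Proof.
move=> k_gt0; have := congr1 (fun m => m%:R : rat) (card_phiB n).
rewrite -(card_V2 n k_gt0) natrD natrM !natrD natrX; lra.
Qed.

Lemma npairs_odd_rat n k h (c : rat) : odd h ->
  (forall X, V1 n k X -> #|[set Y | V2 n k Y & dist_is n k h X Y]|%:R = c) ->
  (npairs n k (vertex n k) h)%:R = 'C(n, k)%:R * c.
Proof.
move=> oh cX; rewrite npairs_odd // natr_sum (eq_bigr (fun=> c)) // sumr_const.
by rewrite -card_V1 mulr_natl cardsE.
Qed.

Theorem mainTheorem15 (n k : nat) (hn : (2 < n)%N) (hk1 : (1 < k)%N) (hkn : (k < n)%N) :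
  [/\ (npairs n k (vertex n k) 1)%:R =
        ('C(n, k))%:R * ((3 ^+ k - 3) / 2 + 2 ^+ k.-1 * (3 ^+ (n - k) - 1))
        :> rat,
      (npairs n k (vertex n k) 3)%:R =
        ('C(n, k))%:R * ((3 ^+ n - 1) / 2 - ('C(n, k))%:R - (3 ^+ k - 3) / 2
                         - 2 ^+ k.-1 * (3 ^+ (n - k) - 1)) :> rat,
      (npairs n k (V1 n k) 2 = 'C('C(n, k), 2))%N &
      (npairs n k (V2 n k) 2 + npairs n k (V2 n k) 4
        = 'C((3 ^ n - 1) %/ 2 - 'C(n, k), 2))%N].
Proof.
have k_gt0 : (0 < k)%N := ltnW hk1.
split.
- apply: npairs_odd_rat => // X V1X.
  by rewrite card_dist1 // card_adj1_V1_rat.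
- apply: npairs_odd_rat => // X V1X.
  have := congr1 (fun m => m%:R : rat) (card_dist3 k_gt0 hkn V1X).
  by rewrite natrD card_adj1_V1_rat // card_V2_rat //; lra.
- rewrite npairs_complete ?card_V1 // => X Y XY V1X V1Y.
  exact: dist_is2_V1.
- rewrite npairs_split ?card_V2_nat // => Y Y' YY' V2Y V2Y'.
  exact: dist_is24_V2.
Qed.
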